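(* Let $L$ be a language of algebras and $\mathfrak A$ an $L$-algebra with universe $A$. For all $a,d\in A$: $a:a\approx_{\mathfrak A}a:d$ holds if and only if $d=a$.
   Context: Let $L$ be a language of algebras: a set of function symbols, each with an arity in $\mathbb N$ (constants are 0-ary function symbols). Fix a countably infinite set $X$ of variables; $T_{L,X}$ is the set of $L$-terms over $X$, and $X(s)$ denotes the set of variables occurring in a term $s$. For an $L$-algebra $\mathfrak A$ with universe $A$, every term $s$ induces a function $s^{\mathfrak A}$, evaluated at assignments of elements of $A$ to variables. An arrow of $\mathfrak A$ is a pair $(a,b)\in A\times A$, written $a\to b$. The generalizations of an arrow $a\to b$ in $\mathfrak A$ are the pairs of arbitrary terms $s\to t$ with $s,t\in T_{L,X}$ such that there is an assignment $\sigma$ of elements of $A$ to the variables in $X(s)\cup X(t)$ with $s^{\mathfrak A}(\sigma)=a$ and $t^{\mathfrak A}(\sigma)=b$; their set is denoted $\uparrow_{\mathfrak A}(a\to b)$. For $L$-algebras $\mathfrak A,\mathfrak B$, an arrow $a\to b$ of $\mathfrak A$ and an arrow $c\to d$ of $\mathfrak B$, set $(a\to b)\uparrow_{(\mathfrak A,\mathfrak B)}(c\to d):=\uparrow_{\mathfrak A}(a\to b)\cap\uparrow_{\mathfrak B}(c\to d)$. A pair of terms $s\to t$ is trivial in $(\mathfrak A,\mathfrak B)$ if it belongs to $\uparrow_{\mathfrak A}(e)$ for every arrow $e$ of $\mathfrak A$ and to $\uparrow_{\mathfrak B}(e')$ for every arrow $e'$ of $\mathfrak B$. We write $a\to b\lesssim_{(\mathfrak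 A,\mathfrak B)}c\to d$ iff either (i) every element of $\uparrow_{\mathfrak A}(a\to b)\cup\uparrow_{\mathfrak B}(c\to d)$ is trivial in $(\mathfrak A,\mathfrak B)$, or (ii) $(a\to b)\uparrow_{(\mathfrak A,\mathfrak B)}(c\to d)$ contains an element not trivial in $(\mathfrak A,\mathfrak B)$ and, for every arrow $c'\to d'$ of $\mathfrak B$, the inclusion $(a\to b)\uparrow_{(\mathfrak A,\mathfrak B)}(c\to d)\subseteq(a\to b)\uparrow_{(\mathfrak A,\mathfrak B)}(c'\to d')$ implies equality of these two sets. Define $a\to b\approx_{(\mathfrak A,\mathfrak B)}c\to d$ iff $a\to b\lesssim_{(\mathfrak A,\mathfrak B)}c\to d$ and $c\to d\lesssim_{(\mathfrak B,\mathfrak A)}a\to b$. For $a,b\in A$ and $c,d\in B$, the similarity-based analogical proportion $a:b\approx_{(\mathfrak A,\mathfrak B)}c:d$ holds iff $a\to b\approx_{(\mathfrak A,\mathfrak B)}c\to d$ and $b\to a\approx_{(\mathfrak A,\mathfrak B)}d\to c$. We write $\approx_{\mathfrak A}$ for $\approx_{(\mathfrak A,\mathfrak A)}$. *)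

From mathcomp Require Import all_boot.
Set Implicit Arguments.
Unset Strict Implicit.
Unset Printing Implicit Defensive.

Record language := Language { sym : Type ; arity : sym -> nat }.

Inductive term (L : language) : Type :=
  | Var : nat -> term L
  | App : forall f : sym L, ('I_(arity f) -> term L) -> term L.

Record algebra (L : language) := Algebra {
  carrier :> Type ;
  op : forall f : sym L, ('I_(arity f) -> carrier) -> carrier }.

Fixpoint eval (L : language) (A : algebra L) (sigma : nat -> A) (t : term L) : A :=
  match t with
  | Var x => sigma x
  | App f args => @op L A f (fun i => eval sigma (args i))
  end.

Definition tpair (L : language) := (term L * term L)%type.

Definition up (L : language) (A : algebra L) (a b : A) : tpair L -> Prop :=
  fun p => exists sigma : nat -> A, eval sigma p.1 = a /\ eval sigma p.2 = b.

Definition up2 (L : language) (A B : algebra L) (a b : A) (c d : B) : tpair L -> Prop :=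
  fun p => up a b p /\ up c d p.

Definition trivial_in (L : language) (A B : algebra L) (p : tpair L) : Prop :=
  (forall a b : A, up a b p) /\ (forall c d : B, up c d p).

Definition lesssim (L : language) (A B : algebra L) (a b : A) (c d : B) : Prop :=
  (forall p, up a b p \/ up c d p -> trivial_in A B p)
  \/
  ((exists p, up2 a b c d p /\ ~ trivial_in A B p) /\
   forall c' d' : B,
     (forall p, up2 a b c d p -> up2 a b c' d' p) ->
     (forall p, up2 a b c d p <-> up2 a b c' d' p)).

Definition arrow_approx (L : language) (A B : algebra L) (a b : A) (c d : B) : Prop :=
  lesssim a b c d /\ lesssim c d a b.

Definition analogy (L : language) (A B : algebra L) (a b : A) (c d : B) : Prop :=
  arrow_approx a b c d /\ arrow_approx b a d c.

From mathcomp Require Import all_boot.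
From Stdlib Require Import Classical.
Set Implicit Arguments.

(* The pair [x -> x] generalizes an arrow [a -> d] exactly when [d = a].  If
   [a -> a ≲ a -> d], then either every generalization of [a -> a] is trivial,
   so [x -> x] generalizes [a -> d]; or [(a -> a)↑(a -> d)] is contained in
   [(a -> a)↑(a -> a)], and maximality forces equality, so again [x -> x]
   generalizes [a -> d].  Conversely every arrow is ≲-related to itself. *)

Section Generalizations.

Variables (L : language) (A : algebra L).

Let x := Var L 0.

Lemma up_var_var (a : A) : up a a (x, x).
Proof. by exists (fun _ => a). Qed.

Lemma up_var_var_eq (a d : A) : up a d (x, x) -> d = a.
Proof. by move=> [sigma [/= -> ->]]. Qed.

Lemma lesssim_refl (a b : A) : lesssim a b a b.
Proof.
have [[p [[upab _] nontriv]]|no_nontriv] :=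
  classic (exists p, up2 a b a b p /\ ~ trivial_in A A p).
  right; split; first by exists p.
  by move=> c' d' sub p'; split=> [/sub|[upab' _]].
left=> p upp; apply: NNPP => nontriv; apply: no_nontriv.
by exists p; case: upp => upp; split.
Qed.

Lemma lesssim_diag_eq (a d : A) : lesssim a a a d -> d = a.
Proof.
case=> [all_triv | [_ maximal]].
  have [_ triv] := all_triv _ (or_introl (up_var_var a)).
  exact/up_var_var_eq/triv.
have sub p : up2 a a a d p -> up2 a a a a p by case=> upaa _.
have [_ /(_ (conj (up_var_var a) (up_var_var a)))] := maximal a a sub (x, x).
by case=> _ /up_var_var_eq.
Qed.

End Generalizations.

Theorem theorem3 (L : language) (A : algebra L) (a d : A) :
  @analogy L A A a a a d <-> d = a.
Proof.
split; first by case=> [[/lesssim_diag_eq]].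
by move=> ->; split; split; exact: lesssim_refl.
Qed.
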